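(* Let $X$ be a real Banach space, $Y$ a closed subspace of $X$, $(\Omega,\Sigma,\mu)$ a complete probability space, $1\leq p<\infty$ and $n$ a positive integer. Let $f_1,\ldots,f_n\in L_p(\mu,X)$ and $g\in L_p(\mu,Y)$. If for almost all $s\in\Omega$, $g(s)$ is a relative $p$-center of $\{f_1(s),\ldots,f_n(s)\}$ in $Y$, then $g$ is a relative $p$-center of $\{f_1,\ldots,f_n\}\subset L_p(\mu,X)$ in $L_p(\mu,Y)$, i.e. $\sum_{i=1}^n\|f_i-g\|_p^p\leq\sum_{i=1}^n\|f_i-h\|_p^p$ for all $h\in L_p(\mu,Y)$.
   Context: $L_p(\mu,X)$ denotes the Banach space of Bochner $p$-integrable functions $\Omega\to X$ with norm $\|f\|_p=(\int_\Omega\|f(s)\|^p\,d\mu(s))^{1/p}$, and $L_p(\mu,Y)$ the subspace of those with values in $Y$. For a subset $Y$ of a normed space $X$, a finite set $\{a_1,\ldots,a_n\}\subset X$ and $m\in[1,\infty)$, a point $y_0\in Y$ is a relative $m$-center of $\{a_1,\ldots,a_n\}$ in $Y$ if $\sum_{i=1}^n\|a_i-y_0\|^m\leq\sum_{i=1}^n\|a_i-y\|^m$ for all $y\in Y$. *)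

From HB Require Import structures.
From mathcomp Require Import all_boot all_order all_algebra.
From mathcomp Require Import all_classical all_reals all_analysis.
Set Implicit Arguments. Unset Strict Implicit. Unset Printing Implicit Defensive.
Import Order.TTheory GRing.Theory Num.Theory.
Import numFieldNormedType.Exports.
Local Open Scope classical_set_scope.
Local Open Scope ring_scope.

Definition simple_fun d (T : measurableType d) (X : Type) (phi : T -> X) :=
  finite_set (range phi) /\ forall x : X, measurable (phi @^-1` [set x]).

Definition strongly_measurable d (T : measurableType d) (R : realType)
    (mu : {measure set T -> \bar R}) (X : normedModType R) (f : T -> X) :=
  exists phi : nat -> T -> X, (forall k, simple_fun (phi k)) /\
    {ae mu, forall s, (fun k => phi k s) @ \oo --> f s}.

Definition Lp_norm_pow d (T : measurableType d) (R : realType)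
    (mu : {measure set T -> \bar R}) (X : normedModType R) (p : R) (f : T -> X)
    : \bar R :=
  (\int[mu]_s (`|f s| `^ p)%:E)%E.

Definition in_Lp d (T : measurableType d) (R : realType)
    (mu : {measure set T -> \bar R}) (X : normedModType R) (p : R) (f : T -> X) :=
  strongly_measurable mu f /\ (Lp_norm_pow mu p f < +oo)%E.

Definition in_LpY d (T : measurableType d) (R : realType)
    (mu : {measure set T -> \bar R}) (X : normedModType R) (Y : set X) (p : R)
    (f : T -> X) :=
  in_Lp mu p f /\ forall s, Y (f s).

Definition linear_subspace (R : realType) (X : normedModType R) (Y : set X) :=
  Y 0 /\ (forall x y, Y x -> Y y -> Y (x + y)) /\
  (forall (a : R) x, Y x -> Y (a *: x)).

Definition rel_center (R : realType) (X : normedModType R) (Y : set X) (n : nat)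
    (a : 'I_n -> X) (m : R) (y0 : X) :=
  Y y0 /\ forall y, Y y -> \sum_(i < n) `|a i - y0| `^ m <= \sum_(i < n) `|a i - y| `^ m.

(* relative m-center in L_p(mu,Y) of f_1..f_n, with distance given by the L_p norm
   (the sums of ||f_i - g||_p^p are finite for members of L_p, compared in \bar R). *)
Definition Lp_rel_center d (T : measurableType d) (R : realType)
    (mu : {measure set T -> \bar R}) (X : normedModType R) (Y : set X) (p : R)
    (n : nat) (f : 'I_n -> T -> X) (g : T -> X) :=
  in_LpY mu Y p g /\
  forall h, in_LpY mu Y p h ->
    (\sum_(i < n) Lp_norm_pow mu p (fun s => (f i s - g s)%R)
      <= \sum_(i < n) Lp_norm_pow mu p (fun s => (f i s - h s)%R))%E.

From HB Require Import structures.
From mathcomp Require Import all_boot all_order all_algebra.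
From mathcomp Require Import all_classical all_reals all_analysis.
From mathcomp Require Import measurable_realfun.
Set Implicit Arguments. Unset Strict Implicit. Unset Printing Implicit Defensive.
Import Order.TTheory GRing.Theory Num.Theory.
Import numFieldNormedType.Exports.
Local Open Scope classical_set_scope.
Local Open Scope ring_scope.

(** The hypothesis gives, for almost every s, the pointwise
    inequality sum_i |f_i(s) - g(s)|^p <= sum_i |f_i(s) - h(s)|^p, and
    integrating it yields the claim, since the integral of a finite sum of
    nonnegative functions is the sum of the integrals.  The only work is
    measurability of the integrands: differences of strongly measurable
    functions are strongly measurable, and the norm of a strongly measurable
    function is an a.e. limit of measurable functions, hence measurable because
    mu is complete. *)

Section simple_fun.
Context d (T : measurableType d).

Lemma simple_fun_preimage (X : Type) (phi : T -> X) (A : set X) :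
  simple_fun phi -> measurable (phi @^-1` A).
Proof.
move=> [fin_phi mphi].
have -> : phi @^-1` A = \bigcup_(x in range phi `&` A) phi @^-1` [set x].
  apply/seteqP; split => [s As|s [x [_ Ax] /= ->]] //.
  by exists (phi s) => //; split => //; exists s.
by apply: fin_bigcup_measurable => //; exact: finite_setIl.
Qed.

Lemma measurable_fun_simple d' (X : measurableType d') (phi : T -> X) :
  simple_fun phi -> measurable_fun setT phi.
Proof. by move=> sphi _ A _; rewrite setTI; exact: simple_fun_preimage. Qed.

Lemma simple_fun_comp (X Z : Type) (F : X -> Z) (phi : T -> X) :
  simple_fun phi -> simple_fun (F \o phi).
Proof.
move=> sphi; split => [|z].
  apply: (@sub_finite_set _ _ (F @` range phi)); last exact/finite_image/sphi.1.
  by move=> _ [s _ <-]; exists (phi s) => //; exists s.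
by rewrite comp_preimage; exact: simple_fun_preimage.
Qed.

Lemma simple_fun_pair (X1 X2 : Type) (phi : T -> X1) (psi : T -> X2) :
  simple_fun phi -> simple_fun psi -> simple_fun (fun s => (phi s, psi s)).
Proof.
move=> sphi spsi; split => [|[x y]].
  apply: (@sub_finite_set _ _ (range phi `*` range psi)).
    by move=> _ [s _ <-]; split; exists s.
  exact: finite_setX sphi.1 spsi.1.
have -> : (fun s => (phi s, psi s)) @^-1` [set (x, y)] =
    phi @^-1` [set x] `&` psi @^-1` [set y].
  by apply/seteqP; split => s /= [-> ->].
by apply: measurableI; exact: simple_fun_preimage.
Qed.

End simple_fun.

Section strongly_measurable.
Context d (T : measurableType d) (R : realType) (mu : {measure set T -> \bar R}).

Lemma strongly_measurableB (X : normedModType R) (f g : T -> X) :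
  strongly_measurable mu f -> strongly_measurable mu g ->
  strongly_measurable mu (fun s => f s - g s).
Proof.
move=> [phi [sphi phi_f]] [psi [spsi psi_g]].
exists (fun k s => phi k s - psi k s); split.
  move=> k; exact: (simple_fun_comp (fun xy : X * X => xy.1 - xy.2)
                                    (simple_fun_pair (sphi k) (spsi k))).
by apply: filterS2 phi_f psi_g => s cvg_f cvg_g; exact: cvgB.
Qed.

Hypothesis mu_complete : measure_is_complete mu.

Lemma emeasurable_fun_ae_cvg (u : (T -> \bar R)^nat) (F : T -> \bar R) :
  (forall k, measurable_fun setT (u k)) ->
  {ae mu, forall s, u ^~ s @ \oo --> F s} -> measurable_fun setT F.
Proof.
move=> mu_ u_F.
apply: (ae_measurable_fun mu_complete (f := fun s => limn_esup (u ^~ s))).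
  by apply: filterS u_F => s /cvg_esups/cvg_lim lim_u _; rewrite limn_esup_lim lim_u.
exact: measurable_fun_limn_esup.
Qed.

Lemma measurable_fun_normr_strongly_measurable (X : normedModType R) (f : T -> X) :
  strongly_measurable mu f -> measurable_fun setT (fun s => `|f s|).
Proof.
move=> [phi [sphi phi_f]]; apply/measurable_EFinP.
apply: (emeasurable_fun_ae_cvg (u := fun k s => `|phi k s|%:E)).
  by move=> k; apply/measurable_EFinP/measurable_fun_simple/simple_fun_comp.
by apply: filterS phi_f => s /cvg_norm phi_f_s; apply: cvg_comp phi_f_s _.
Qed.

End strongly_measurable.

Section Lp_norm_pow.
Context d (T : measurableType d) (R : realType) (mu : {measure set T -> \bar R}).
Hypothesis mu_complete : measure_is_complete mu.
Context (X : normedModType R) (p : R).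

Lemma measurable_fun_powR_normr (f : T -> X) : strongly_measurable mu f ->
  measurable_fun setT (fun s => (`|f s| `^ p)%:E).
Proof.
move=> f_sm; apply/measurable_EFinP; apply: (measurableT_comp (measurable_powR p)).
exact/(measurable_fun_normr_strongly_measurable mu_complete).
Qed.

Lemma sum_Lp_norm_pow n (u : 'I_n -> T -> X) :
  (forall i, strongly_measurable mu (u i)) ->
  (\sum_(i < n) Lp_norm_pow mu p (u i) =
   \int[mu]_s \sum_(i < n) (`|u i s| `^ p)%:E)%E.
Proof.
move=> u_sm; rewrite /Lp_norm_pow ge0_integral_sum // => i.
exact/measurable_fun_powR_normr/u_sm.
Qed.

Lemma sum_Lp_norm_pow_le_ae n (u v : 'I_n -> T -> X) :
  (forall i, strongly_measurable mu (u i)) ->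
  (forall i, strongly_measurable mu (v i)) ->
  {ae mu, forall s, \sum_(i < n) `|u i s| `^ p <= \sum_(i < n) `|v i s| `^ p} ->
  (\sum_(i < n) Lp_norm_pow mu p (u i) <= \sum_(i < n) Lp_norm_pow mu p (v i))%E.
Proof.
move=> u_sm v_sm le_uv; rewrite !sum_Lp_norm_pow //.
have sum_ge0 (w : 'I_n -> T -> X) s : (0 <= \sum_(i < n) (`|w i s| `^ p)%:E)%E.
  by apply: sume_ge0 => i _; rewrite lee_fin powR_ge0.
apply: ae_ge0_le_integral => //.
- by apply: emeasurable_sum => i; exact: measurable_fun_powR_normr.
- by apply: emeasurable_sum => i; exact: measurable_fun_powR_normr.
- by apply: filterS le_uv => s le_uv_s _; rewrite !sumEFin lee_fin.
Qed.

End Lp_norm_pow.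

Theorem mainTheorem3 (R : realType) (X : completeNormedModType R) (Y : set X)
  (d : measure_display) (T : measurableType d) (mu : probability T R)
  (p : R) (n : nat) (f : 'I_n -> T -> X) (g : T -> X) :
  linear_subspace Y -> closed Y ->
  measure_is_complete mu ->
  1 <= p -> (0 < n)%N ->
  (forall i, in_Lp mu p (f i)) ->
  in_LpY mu Y p g ->
  {ae mu, forall s, rel_center Y (fun i => f i s) p (g s)} ->
  Lp_rel_center mu Y p f g.
Proof.
move=> _ _ mu_complete _ _ f_Lp g_LpY g_center; split => // h [[h_sm _] h_Y].
have [[g_sm _] _] := g_LpY.
apply: sum_Lp_norm_pow_le_ae => // [i|i|].
- exact: strongly_measurableB (f_Lp i).1 g_sm.
- exact: strongly_measurableB (f_Lp i).1 h_sm.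
- by apply: filterS g_center => s [_ g_center_s]; exact: g_center_s.
Qed.
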